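(* Let $S\subseteq\mathbb{N}^{\mathbb{N}}$. Then $S$ is guessable if and only if $S$ is $\mathbf{\Delta}^0_2$.
   Context: A function $G:\mathbb{N}^{<\mathbb{N}}\to\{0,1\}$ ($\mathbb{N}^{<\mathbb{N}}$ = finite sequences of naturals) is a guesser for $S\subseteq\mathbb{N}^{\mathbb{N}}$ if for every $f:\mathbb{N}\to\mathbb{N}$ there is $m>0$ such that for all $n>m$, $G(f(0),\ldots,f(n))$ equals $1$ if $f\in S$ and $0$ if $f\notin S$; $S$ is guessable if it has a guesser. $\mathbb{N}^{\mathbb{N}}$ carries the (Baire space) topology whose basic open sets are $\{f\in\mathbb{N}^{\mathbb{N}}: f \text{ extends } f_0\}$ for $f_0\in\mathbb{N}^{<\mathbb{N}}$. A set is $\mathbf{\Delta}^0_2$ if it is both $G_\delta$ (a countable intersection of open sets) and $F_\sigma$ (a countable union of closed sets). *)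

From Stdlib Require Import List Arith.
Import ListNotations.

Definition extends (f : nat -> nat) (s : list nat) : Prop :=
  s = map f (seq 0 (length s)).

Definition initseg (f : nat -> nat) (n : nat) : list nat := map f (seq 0 (S n)).

Definition guesser (G : list nat -> bool) (S : (nat -> nat) -> Prop) : Prop :=
  forall f : nat -> nat, exists m : nat, 0 < m /\
    forall n : nat, m < n ->
      (S f -> G (initseg f n) = true) /\ (~ S f -> G (initseg f n) = false).

Definition guessable (S : (nat -> nat) -> Prop) : Prop :=
  exists G : list nat -> bool, guesser G S.

Definition baire_open (U : (nat -> nat) -> Prop) : Prop :=
  exists B : list nat -> Prop,
    forall f, U f <-> exists s, B s /\ extends f s.

Definition baire_closed (C : (nat -> nat) -> Prop) : Prop :=
  baire_open (fun f => ~ C f).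

Definition G_delta (S : (nat -> nat) -> Prop) : Prop :=
  exists U : nat -> (nat -> nat) -> Prop,
    (forall k, baire_open (U k)) /\ (forall f, S f <-> forall k, U k f).

Definition F_sigma (S : (nat -> nat) -> Prop) : Prop :=
  exists C : nat -> (nat -> nat) -> Prop,
    (forall k, baire_closed (C k)) /\ (forall f, S f <-> exists k, C k f).

Definition Delta02 (S : (nat -> nat) -> Prop) : Prop := G_delta S /\ F_sigma S.

(* A guesser G exhibits S as the set of f on which G (f(0),...,f(n)) is true
   infinitely often (a G_delta set) and also as the set where it is
   eventually true (an F_sigma set).  Conversely, if S is the intersection
   of the open sets U_k and the union of the closed sets C_k, then the closed
   sets C_0, ~U_0, C_1, ~U_1, ... cover Baire space, and f lies in S exactly
   when the least index j with f in the j-th set is even.  Each set before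
   the j-th one misses f and, being closed, is eventually refuted by a
   cylinder around f, while the j-th one is never refuted; so guessing the
   parity of the least index not yet refuted by the data is correct from
   some point on. *)
From Stdlib Require Import ssreflect List Arith Lia Wf_nat Classical ClassicalEpsilon.

Lemma length_initseg f n : length (initseg f n) = S n.
Proof. by rewrite /initseg length_map length_seq. Qed.

Lemma extends_initseg f n : extends f (initseg f n).
Proof. by rewrite /extends length_initseg. Qed.

Lemma extends_length_initseg f s n :
  length s = S n -> extends f s -> s = initseg f n.
Proof. by rewrite /extends => -> . Qed.

Lemma extends_ext g h s :
  (forall i, i < length s -> g i = h i) -> extends g s -> extends h s.
Proof.
  rewrite /extends => gh Hs; rewrite {1}Hs; apply: map_ext_in => i.
  rewrite in_seq => Hi; apply: gh; lia.
Qed.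

Lemma nth_initseg f n i : i <= n -> nth i (initseg f n) 0 = f i.
Proof.
  move=> Hi; rewrite /initseg (nth_indep _ _ (f 0)).
  - by rewrite length_map length_seq; lia.
  - by rewrite map_nth seq_nth; [lia|].
Qed.

(* [nth i sg 0] reads [sg] as the infinite sequence [sg] followed by zeros. *)
Lemma extends_nth_initseg f n s : length s <= S n ->
  extends (fun i => nth i (initseg f n) 0) s <-> extends f s.
Proof.
  move=> Hs; split; apply: extends_ext => i Hi; rewrite nth_initseg //; lia.
Qed.

Lemma baire_open_ext (U V : (nat -> nat) -> Prop) :
  (forall f, U f <-> V f) -> baire_open U -> baire_open V.
Proof.
  move=> UV [B HB]; exists B => f; rewrite -UV; exact: HB.
Qed.

Lemma baire_open_exists_initseg (P : nat -> list nat -> Prop) :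
  baire_open (fun f => exists n, P n (initseg f n)).
Proof.
  exists (fun s => exists n, length s = S n /\ P n s) => f; split.
  - move=> [n Pn]; exists (initseg f n); split; last exact: extends_initseg.
    by exists n; rewrite length_initseg.
  - move=> [s [[n [Hs Pn]] Hf]]; exists n.
    by rewrite -(extends_length_initseg _ _ _ Hs Hf).
Qed.

Lemma baire_closed_forall_initseg (P : nat -> list nat -> Prop) :
  baire_closed (fun f => forall n, P n (initseg f n)).
Proof.
  apply: (baire_open_ext _ _ _ (baire_open_exists_initseg (fun n s => ~ P n s))).
  move=> f; split; [move=> [n Pn] Hf; exact: Pn (Hf n)|].
  by move/not_all_ex_not.
Qed.

Lemma G_delta_infinitely_often (G : list nat -> bool) :
  G_delta (fun f => forall m, exists n, m < n /\ G (initseg f n) = true).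
Proof.
  exists (fun m f => exists n, m < n /\ G (initseg f n) = true); split=> //.
  move=> m; exact: (baire_open_exists_initseg (fun n s => m < n /\ G s = true)).
Qed.

Lemma F_sigma_eventually (G : list nat -> bool) :
  F_sigma (fun f => exists m, forall n, m < n -> G (initseg f n) = true).
Proof.
  exists (fun m f => forall n, m < n -> G (initseg f n) = true); split=> //.
  move=> m; exact: (baire_closed_forall_initseg (fun n s => m < n -> G s = true)).
Qed.

Section Guesser.

Variables (G : list nat -> bool) (A : (nat -> nat) -> Prop).
Hypothesis HG : guesser G A.

Lemma guesser_infinitely_often f :
  A f <-> forall m, exists n, m < n /\ G (initseg f n) = true.
Proof.
  have [m0 [_ Hm0]] := HG f; split.
  - move=> Af m; exists (S (m + m0)); split; first lia.
    by apply: (proj1 (Hm0 _ _)) => //; lia.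
  - move=> Hf; apply: NNPP => nAf; have [n [Hn Gn]] := Hf m0.
    by rewrite (proj2 (Hm0 n Hn) nAf) in Gn.
Qed.

Lemma guesser_eventually f :
  A f <-> exists m, forall n, m < n -> G (initseg f n) = true.
Proof.
  have [m0 [_ Hm0]] := HG f; split.
  - by move=> Af; exists m0 => n Hn; apply: (proj1 (Hm0 n Hn)).
  - move=> [m Hm]; apply: NNPP => nAf.
    have Gn : G (initseg f (S (m + m0))) = true by apply: Hm; lia.
    by rewrite (proj2 (Hm0 _ _) nAf) in Gn; lia.
Qed.

End Guesser.

Lemma guessable_Delta02 A : guessable A -> Delta02 A.
Proof.
  move=> [G HG]; split.
  - have [U [HU HSU]] := G_delta_infinitely_often G.
    by exists U; split=> // f; rewrite -HSU; exact: guesser_infinitely_often.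
  - have [C [HC HSC]] := F_sigma_eventually G.
    by exists C; split=> // f; rewrite -HSC; exact: guesser_eventually.
Qed.

Fixpoint first_from (P : nat -> Prop) (k j : nat) : nat :=
  match k with
  | 0 => j
  | S k' =>
      match excluded_middle_informative (P j) with
      | left _ => j
      | right _ => first_from P k' (S j)
      end
  end.

Lemma first_from_least (P : nat -> Prop) k j i :
  j <= i < j + k -> P i -> (forall i', j <= i' < i -> ~ P i') ->
  first_from P k j = i.
Proof.
  elim: k j => [|k IHk] j Hi Pi Hmin /=; first lia.
  case: excluded_middle_informative => [Pj|nPj].
  - by case: (Nat.eq_dec j i) => [//|ji]; exfalso; apply: (Hmin j) => //; lia.
  - have ji : j <> i by move=> ji; rewrite ji in nPj.
    by apply: IHk => // [|i' Hi']; [lia | apply: Hmin; lia].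
Qed.

Lemma eventually_forall_lt (R : nat -> nat -> Prop) m :
  (forall j, j < m -> exists L, forall n, L <= n -> R j n) ->
  exists L, forall j, j < m -> forall n, L <= n -> R j n.
Proof.
  elim: m => [|m IHm] HR; first by exists 0 => j Hj; lia.
  have [L1 HL1] : exists L, forall j, j < m -> forall n, L <= n -> R j n.
    by apply: IHm => j Hj; apply: HR; lia.
  have [L2 HL2] := HR m (Nat.lt_succ_diag_r m).
  exists (max L1 L2) => j Hj n Hn.
  by case: (Nat.eq_dec j m) => [->|jm]; [apply: HL2 | apply: HL1]; lia.
Qed.

Section ClosedCover.

Variable E : nat -> (nat -> nat) -> Prop.
Hypothesis E_closed : forall j, baire_closed (E j).
Hypothesis E_cover : forall f, exists j, E j f.

Definition refuted (j : nat) (sg : list nat) : Prop :=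
  exists s, length s <= length sg /\ extends (fun i => nth i sg 0) s /\
    forall g, extends g s -> ~ E j g.

Definition guess_index (sg : list nat) : nat :=
  first_from (fun j => ~ refuted j sg) (length sg) 0.

Lemma refuted_eventually j f :
  ~ E j f -> exists L, forall n, L <= n -> refuted j (initseg f n).
Proof.
  have [B HB] := E_closed j; rewrite HB => -[s [Bs Hs]].
  exists (length s) => n Hn; exists s; rewrite length_initseg.
  split; first lia; split; first by rewrite extends_nth_initseg //; lia.
  by move=> g Hg; apply/HB; exists s.
Qed.

Lemma member_not_refuted j f n : E j f -> ~ refuted j (initseg f n).
Proof.
  move=> Ef [s [Hs [Hsf Hsj]]]; rewrite length_initseg in Hs.
  by apply: (Hsj f) => //; rewrite -(extends_nth_initseg f n).
Qed.

Lemma guess_index_eventually f :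
  exists j, E j f /\ exists L, forall n, L <= n -> guess_index (initseg f n) = j.
Proof.
  have [j0 [[Ej0 Hmin] _]] := dec_inh_nat_subset_has_unique_least_element
    (fun j => E j f) (fun j => classic (E j f)) (E_cover f).
  have [L HL] : exists L, forall j, j < j0 -> forall n, L <= n ->
      refuted j (initseg f n).
    apply: eventually_forall_lt => j Hj; apply: refuted_eventually => Ej.
    by have := Hmin j Ej; lia.
  exists j0; split=> //; exists (L + j0) => n Hn.
  apply: first_from_least; rewrite ?length_initseg; first lia.
  - exact: member_not_refuted.
  - by move=> j Hj []; apply: HL; lia.
Qed.

End ClosedCover.

Section Delta02Guesser.

Variables (A : (nat -> nat) -> Prop) (U C : nat -> (nat -> nat) -> Prop).
Hypotheses (U_open : forall k, baire_open (U k)) (A_cap : forall f, A f <-> forall k, U k f).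
Hypotheses (C_closed : forall k, baire_closed (C k)) (A_cup : forall f, A f <-> exists k, C k f).

Definition witness (j : nat) (f : nat -> nat) : Prop :=
  if Nat.even j then C (Nat.div2 j) f else ~ U (Nat.div2 j) f.

Lemma witness_closed j : baire_closed (witness j).
Proof.
  rewrite /witness; case: (Nat.even j) => //.
  apply: (baire_open_ext _ _ _ (U_open (Nat.div2 j))) => f.
  by split=> [Uf nUf|]; [exact: nUf Uf | exact: NNPP].
Qed.

Lemma witness_cover f : exists j, witness j f.
Proof.
  rewrite /witness; case: (classic (A f)) => [/A_cup [k Ck] | nAf].
  - by exists (2 * k); rewrite Nat.even_even Nat.div2_double.
  - have [k nUk] : exists k, ~ U k f.
      by apply: not_all_ex_not => HU; apply: nAf; rewrite A_cap.
    by exists (2 * k + 1); rewrite Nat.even_odd Nat.add_1_r Nat.div2_succ_double.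
Qed.

Lemma witness_parity j f : witness j f -> (A f <-> Nat.even j = true).
Proof.
  rewrite /witness; case: (Nat.even j) => Wf; split=> //.
  - by rewrite A_cup; exists (Nat.div2 j).
  - by move/A_cap.
Qed.

End Delta02Guesser.

Lemma Delta02_guessable A : Delta02 A -> guessable A.
Proof.
  move=> [[U [U_open A_cap]] [C [C_closed A_cup]]].
  exists (fun sg => Nat.even (guess_index (witness U C) sg)) => f.
  have [j [Wj [L HL]]] := guess_index_eventually _
    (witness_closed _ _ U_open C_closed) (witness_cover _ _ _ A_cap A_cup) f.
  exists (S L); split; first lia; move=> n Hn.
  have -> : guess_index (witness U C) (initseg f n) = j by apply: HL; lia.
  have Aj := witness_parity _ _ _ A_cap A_cup _ _ Wj.
  case: (Nat.even j) Aj => Aj; split=> //.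
  - by move=> []; apply/Aj.
  - by move/Aj.
Qed.

Theorem theorem16 (S : (nat -> nat) -> Prop) : guessable S <-> Delta02 S.
Proof. split; [exact: guessable_Delta02 | exact: Delta02_guessable]. Qed.
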